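(* If $n_1=\dots=n_Q=n/Q$, then $\boldsymbol{c}_q[h]=\boldsymbol{b}_q[\mathcal{F}_h]$ for all $q,h$, $\hat{\boldsymbol{\theta}}_x[h]=\hat{\boldsymbol{\tau}}_x[\mathcal{F}_h]$, and $M_h=\frac{n}{4}\sum_{f\in\mathcal{F}_h}\hat{\boldsymbol{\tau}}_{x,f}'\boldsymbol{S}_{xx}^{-1}\hat{\boldsymbol{\tau}}_{x,f}$.
   Context: Setup ($2^K$ factorial experiment, finite population). $K\ge1$ two-level factors, $Q=2^K$ treatment combinations $q=1,\dots,Q$; combination $q$ sets factor $k$ at $\iota_k(q)\in\{-1,+1\}$, bijectively onto $\{-1,+1\}^K$. $F=Q-1$ factorial effects, one per nonempty $A\subseteq\{1,\dots,K\}$, enumerated $f=1,\dots,F$, with $g_{fq}=\prod_{k\in A}\iota_k(q)$; $\boldsymbol{b}_q=(g_{1q},\dots,g_{Fq})'$. Units $i=1,\dots,n$ with covariates $\boldsymbol{x}_i\in\mathbb{R}^L$; $\boldsymbol{S}_{xx}$ their finite-population covariance (divisor $n-1$, nonsingular). Treatment groups of sizes $n_q\ge1$; $\hat{\bar{\boldsymbol{x}}}(q)$ is the covariate mean in group $q$; $\hat{\boldsymbol{\tau}}_{x,f}=2^{-(K-1)}\sum_qg_{fq}\hat{\bar{\boldsymbol{x}}}(q)$; $\hat{\boldsymbol{\tau}}_x[\mathcal{I}]$ is the concatenation of $\hat{\boldsymbol{\tau}}_{x,f}$, $f\in\mathcal{I}$ (in increasing order). Tiers: partition $\{1,\dots,F\}$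 into disjoint nonempty $\mathcal{F}_1,\dots,\mathcal{F}_H$, $\mathcal{F}_{\overline h}=\bigcup_{l\le h}\mathcal{F}_l$. $\tilde{\boldsymbol{B}}=2^{-2(K-1)}\sum_qn_q^{-1}\boldsymbol{b}_q\boldsymbol{b}_q'$; $\boldsymbol{b}_q[\mathcal{I}]$ subvector, $\tilde{\boldsymbol{B}}[\mathcal{I},\mathcal{J}]$ submatrix. $\boldsymbol{c}_q[1]=\boldsymbol{b}_q[\mathcal{F}_1]$, and for $h\ge2$, $\boldsymbol{c}_q[h]=\boldsymbol{b}_q[\mathcal{F}_h]-\tilde{\boldsymbol{B}}[\mathcal{F}_h,\mathcal{F}_{\overline{h-1}}]\{\tilde{\boldsymbol{B}}[\mathcal{F}_{\overline{h-1}},\mathcal{F}_{\overline{h-1}}]\}^{-1}\boldsymbol{b}_q[\mathcal{F}_{\overline{h-1}}]$. $\hat{\boldsymbol{\theta}}_x[h]=2^{-(K-1)}\sum_q\boldsymbol{c}_q[h]\otimes\hat{\bar{\boldsymbol{x}}}(q)$, $\boldsymbol{W}_{xx}[h]=2^{-2(K-1)}\sum_qn_q^{-1}(\boldsymbol{c}_q[h]\boldsymbol{c}_q[h]')\otimes\boldsymbol{S}_{xx}$, $M_h=\hat{\boldsymbol{\theta}}_x[h]'\boldsymbol{W}_{xx}[h]^{-1}\hat{\boldsymbol{\theta}}_x[h]$. *)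

From HB Require Import structures.
From mathcomp Require Import all_boot all_order all_algebra.
From mathcomp Require Import mxtens.
Set Implicit Arguments. Unset Strict Implicit. Unset Printing Implicit Defensive.
Import Order.TTheory GRing.Theory Num.Theory.
Local Open Scope ring_scope.

(* Conventions:
   - treatment combinations q are indexed by 'I_(2^K); the level of factor k
     in combination q is  iota q k : bool  (true = +1, false = -1);
   - factorial effects f are indexed by 'I_(2^K).-1, effect f corresponds to
     the nonempty set  A f : {set 'I_K}  of factors;
   - units i : 'I_n, covariates x i : 'cV[R]_L, assignment Z i : 'I_(2^K). *)

Definition sgn (R : ringType) (b : bool) : R := if b then 1 else -1.

Definition gfq (R : ringType) (K : nat) (iota : 'I_(2 ^ K) -> {ffun 'I_K -> bool})
  (A : 'I_(2 ^ K).-1 -> {set 'I_K}) (f : 'I_(2 ^ K).-1) (q : 'I_(2 ^ K)) : R :=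
  \prod_(k in A f) sgn R (iota q k).

Definition bvec (R : ringType) (K : nat) (iota : 'I_(2 ^ K) -> {ffun 'I_K -> bool})
  (A : 'I_(2 ^ K).-1 -> {set 'I_K}) (q : 'I_(2 ^ K)) : 'cV[R]_((2 ^ K).-1) :=
  \col_f gfq R iota A f q.

Definition nq (n K : nat) (Z : 'I_n -> 'I_(2 ^ K)) (q : 'I_(2 ^ K)) : nat :=
  #|[set i | Z i == q]|.

Definition gmean (R : fieldType) (n L K : nat) (x : 'I_n -> 'cV[R]_L)
  (Z : 'I_n -> 'I_(2 ^ K)) (q : 'I_(2 ^ K)) : 'cV[R]_L :=
  (nq Z q)%:R^-1 *: \sum_(i | Z i == q) x i.

Definition xmean (R : fieldType) (n L : nat) (x : 'I_n -> 'cV[R]_L) : 'cV[R]_L :=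
  n%:R^-1 *: \sum_i x i.

Definition Sxx (R : fieldType) (n L : nat) (x : 'I_n -> 'cV[R]_L) : 'M[R]_L :=
  (n.-1)%:R^-1 *: \sum_i ((x i - xmean x) *m (x i - xmean x)^T).

Definition tau_x (R : fieldType) (n L K : nat) (iota : 'I_(2 ^ K) -> {ffun 'I_K -> bool})
  (A : 'I_(2 ^ K).-1 -> {set 'I_K}) (x : 'I_n -> 'cV[R]_L)
  (Z : 'I_n -> 'I_(2 ^ K)) (f : 'I_(2 ^ K).-1) : 'cV[R]_L :=
  (2 ^ (K - 1))%:R^-1 *: \sum_q (gfq R iota A f q *: gmean x Z q).

(* subvector v[I] and submatrix B[I,J] (indices in increasing order) *)
Definition subv (R : Type) (m : nat) (I : {set 'I_m}) (v : 'cV[R]_m) : 'cV[R]_#|I| :=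
  \col_i v (enum_val i) 0.
Definition subm (R : Type) (m : nat) (I J : {set 'I_m}) (B : 'M[R]_m)
  : 'M[R]_(#|I|, #|J|) :=
  \matrix_(i, j) B (enum_val i) (enum_val j).

(* concatenation \hat\tau_x[I] of the \hat\tau_{x,f}, f in I (increasing) *)
Definition tau_cat (R : Type) (F L : nat) (t : 'I_F -> 'cV[R]_L) (I : {set 'I_F})
  : 'cV[R]_(#|I| * L) :=
  \col_k t (enum_val (mxtens_unindex k).1) (mxtens_unindex k).2 0.

Definition Btilde (R : fieldType) (n K : nat) (iota : 'I_(2 ^ K) -> {ffun 'I_K -> bool})
  (A : 'I_(2 ^ K).-1 -> {set 'I_K}) (Z : 'I_n -> 'I_(2 ^ K)) : 'M[R]_((2 ^ K).-1) :=
  (2 ^ (2 * (K - 1)))%:R^-1 *: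
    \sum_q ((nq Z q)%:R^-1 *: (bvec R iota A q *m (bvec R iota A q)^T)).

(* tiers: tier f = h means f \in F_h (tiers indexed 0..H-1) *)
Definition tierset (F H : nat) (tier : 'I_F -> 'I_H) (h : 'I_H) : {set 'I_F} :=
  [set f | tier f == h].
Definition tierbefore (F H : nat) (tier : 'I_F -> 'I_H) (h : 'I_H) : {set 'I_F} :=
  [set f | (tier f < h)%N].

Definition cvec (R : fieldType) (n K H : nat) (iota : 'I_(2 ^ K) -> {ffun 'I_K -> bool})
  (A : 'I_(2 ^ K).-1 -> {set 'I_K}) (Z : 'I_n -> 'I_(2 ^ K))
  (tier : 'I_(2 ^ K).-1 -> 'I_H) (q : 'I_(2 ^ K)) (h : 'I_H)
  : 'cV[R]_#|tierset tier h| :=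
  let b := bvec R iota A q in
  let B := Btilde R iota A Z in
  if val h == 0%N then subv (tierset tier h) b
  else subv (tierset tier h) b
       - subm (tierset tier h) (tierbefore tier h) B
         *m invmx (subm (tierbefore tier h) (tierbefore tier h) B)
         *m subv (tierbefore tier h) b.

Definition theta_x (R : fieldType) (n L K H : nat) (iota : 'I_(2 ^ K) -> {ffun 'I_K -> bool})
  (A : 'I_(2 ^ K).-1 -> {set 'I_K}) (x : 'I_n -> 'cV[R]_L) (Z : 'I_n -> 'I_(2 ^ K))
  (tier : 'I_(2 ^ K).-1 -> 'I_H) (h : 'I_H) : 'cV[R]_(#|tierset tier h| * L) :=
  (2 ^ (K - 1))%:R^-1 *: \sum_q (cvec R iota A Z tier q h *t gmean x Z q).

Definition W_xx (R : fieldType) (n L K H : nat) (iota : 'I_(2 ^ K) -> {ffun 'I_K -> bool})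
  (A : 'I_(2 ^ K).-1 -> {set 'I_K}) (x : 'I_n -> 'cV[R]_L) (Z : 'I_n -> 'I_(2 ^ K))
  (tier : 'I_(2 ^ K).-1 -> 'I_H) (h : 'I_H) : 'M[R]_(#|tierset tier h| * L) :=
  (2 ^ (2 * (K - 1)))%:R^-1 *:
    \sum_q ((nq Z q)%:R^-1 *:
      ((cvec R iota A Z tier q h *m (cvec R iota A Z tier q h)^T) *t Sxx x)).

Definition M_h (R : fieldType) (n L K H : nat) (iota : 'I_(2 ^ K) -> {ffun 'I_K -> bool})
  (A : 'I_(2 ^ K).-1 -> {set 'I_K}) (x : 'I_n -> 'cV[R]_L) (Z : 'I_n -> 'I_(2 ^ K))
  (tier : 'I_(2 ^ K).-1 -> 'I_H) (h : 'I_H) : R :=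
  ((theta_x iota A x Z tier h)^T *m invmx (W_xx iota A x Z tier h)
     *m theta_x iota A x Z tier h) 0 0.

From HB Require Import structures.
From mathcomp Require Import all_boot all_order all_algebra.
From mathcomp Require Import mxtens.
From mathcomp Require Import ring zify.
Import Order.TTheory GRing.Theory Num.Theory.
Local Open Scope ring_scope.

(* The contrast vectors b_q of a full 2^K design are orthogonal,
   sum_q g_fq g_f'q = 2^K [f = f'], since flipping one factor of the symmetric
   difference A f (+) A f' reverses the sign of g_fq g_f'q.  With equal group
   sizes n/2^K the Gram matrix Btilde is therefore the scalar matrix 4/n, its
   off-diagonal blocks vanish, and the Gram-Schmidt corrections in c_q[h]
   disappear.  Hence W_xx[h] = (4/n) (I (x) S_xx), and the quadratic form M_h
   splits into one term per effect of tier h. *)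

Lemma sgn_prodM (R : comNzRingType) K (s : 'I_K -> bool) (X Y : {set 'I_K}) :
  \prod_(k in X) sgn R (s k) * \prod_(k in Y) sgn R (s k)
  = \prod_(k | (k \in X) != (k \in Y)) sgn R (s k).
Proof.
rewrite (big_mkcond (mem X)) (big_mkcond (mem Y)) -big_split [RHS]big_mkcond /=.
apply: eq_bigr => k _.
by case: (k \in X) (k \in Y) (s k) => [] [] []; rewrite /sgn /= ?mulr1 ?mul1r ?mulrNN ?mulr1.
Qed.

Lemma sum_ffun_sgn_prod_eq0 (R : numDomainType) K (D : pred 'I_K) k0 : D k0 ->
  \sum_(g : {ffun 'I_K -> bool}) \prod_(k | D k) sgn R (g k) = 0.
Proof.
move=> Dk0; set S := \sum_g _.
pose flip (g : {ffun 'I_K -> bool}) := [ffun k => if k == k0 then ~~ g k else g k].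
have flipK : involutive flip.
  by move=> g; apply/ffunP => k; rewrite !ffunE; case: eqP => // _; rewrite negbK.
have flipN g : \prod_(k | D k) sgn R (flip g k) = - \prod_(k | D k) sgn R (g k).
  rewrite (bigD1 k0) //= [in RHS](bigD1 k0) //= ffunE eqxx -mulNr.
  congr (_ * _); first by rewrite /sgn; case: (g k0); rewrite ?opprK.
  by apply: eq_bigr => k /andP[_ /negbTE k_neq0]; rewrite ffunE k_neq0.
have S_opp : S = - S.
  by rewrite {1}/S (reindex_inj (inv_inj flipK)) -sumrN; apply: eq_bigr => g _.
have /eqP : S *+ 2 = 0 by rewrite mulr2n {1}S_opp addNr.
by rewrite mulrn_eq0 => /eqP.
Qed.

Lemma gfq_orthogonal (R : numDomainType) K (iota : 'I_(2 ^ K) -> {ffun 'I_K -> bool})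
    (A : 'I_(2 ^ K).-1 -> {set 'I_K}) :
  bijective iota -> injective A ->
  forall f f', \sum_q gfq R iota A f q * gfq R iota A f' q = (f == f')%:R * (2 ^ K)%:R.
Proof.
move=> iota_bij A_inj f f'; rewrite /gfq.
under eq_bigr do rewrite sgn_prodM.
have [<-|f_neq] := eqVneq f f'.
  rewrite mul1r -[in RHS](card_ord (2 ^ K)) -sumr_const.
  by apply: eq_bigr => q _; rewrite big_pred0 // => k; rewrite eqxx.
have [k0 Ak0] : exists k0, (k0 \in A f) != (k0 \in A f').
  apply/existsP; apply: contraNT f_neq => /existsPn A_eq.
  by apply/eqP/A_inj/setP => k; apply/eqP; rewrite -[_ == _]negbK A_eq.
rewrite mul0r -(reindex iota (P := xpredT)
  (F := fun g => \prod_(k | (k \in A f) != (k \in A f')) sgn R (g k))).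
  exact: sum_ffun_sgn_prod_eq0 Ak0.
exact: onW_bij.
Qed.

Lemma sum_mxtens_index (V : nmodType) m p (F : 'I_(m * p) -> V) :
  \sum_k F k = \sum_(i < m) \sum_(j < p) F (mxtens_index (i, j)).
Proof.
rewrite pair_big (reindex (@mxtens_index m p)) /=; first by apply: eq_bigr => -[].
by exists (@mxtens_unindex m p) => k _; rewrite ?mxtens_indexK ?mxtens_unindexK.
Qed.

Lemma tensmx11 (R : nzRingType) m p : (1%:M : 'M[R]_m) *t (1%:M : 'M[R]_p) = 1%:M.
Proof.
apply/matrixP => k l.
case: (mxtens_indexP k) => i j; case: (mxtens_indexP l) => i' j'.
rewrite tensmxE !mxE -natrM mulnb (inj_eq (can_inj (@mxtens_indexK m p))).
by rewrite xpair_eqE.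
Qed.

Lemma scalar_tensmx (R : nzRingType) m p (a : R) (S : 'M[R]_p) :
  (a%:M : 'M_m) *t S = a *: (1%:M *t S).
Proof.
apply/matrixP => k l.
case: (mxtens_indexP k) => i j; case: (mxtens_indexP l) => i' j'.
by rewrite [LHS]tensmxE [in RHS]mxE tensmxE !mxE mulr_natl mulrnAl mulrnAr.
Qed.

Section TensUnit.
Variables (R : comUnitRingType) (m p : nat) (S : 'M[R]_p).
Hypothesis S_unit : S \in unitmx.

Lemma tens1mx_mulV : (1%:M : 'M_m) *t S *m (1%:M *t invmx S) = 1%:M.
Proof. by rewrite tensmx_mul mulmx1 mulmxV // tensmx11. Qed.

Lemma tens1mx_unit : (1%:M : 'M_m) *t S \in unitmx.
Proof. by case: (mulmx1_unit tens1mx_mulV). Qed.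

Lemma invmx_tens1mx : invmx ((1%:M : 'M_m) *t S) = 1%:M *t invmx S.
Proof. by rewrite -[invmx _]mulmx1 -tens1mx_mulV mulKmx // tens1mx_unit. Qed.

End TensUnit.

Lemma tau_cat_quad_form (R : comNzRingType) F L (t : 'I_F -> 'cV[R]_L) (I : {set 'I_F})
    (P : 'M[R]_L) :
  ((tau_cat t I)^T *m (1%:M *t P) *m tau_cat t I) 0 0
  = \sum_(f in I) ((t f)^T *m P *m t f) 0 0.
Proof.
rewrite big_enum_val mxE sum_mxtens_index; apply: eq_bigr => i _.
rewrite mxE; apply: eq_bigr => j _.
rewrite [in LHS]mxE [in RHS]mxE sum_mxtens_index (bigD1 i) //=.
rewrite [X in (_ + X) * _]big1 ?addr0; last first.
  move=> i' /negbTE i'_neq; apply: big1 => j' _.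
  by rewrite tensmxE [1%:M _ _]mxE i'_neq mul0r mulr0.
congr (_ * _); last by rewrite /tau_cat mxE mxtens_indexK.
by apply: eq_bigr => j' _; rewrite tensmxE [1%:M _ _]mxE eqxx mul1r !mxE mxtens_indexK.
Qed.

Lemma subm_scalar_mx (R : nzRingType) m (I J : {set 'I_m}) (a : R) :
  subm I J a%:M = \matrix_(i, j) (a *+ (enum_val i == enum_val j)).
Proof. by apply/matrixP => i j; rewrite !mxE. Qed.

Lemma subm_scalar_mx_disjoint (R : nzRingType) m (I J : {set 'I_m}) (a : R) :
  [disjoint I & J] -> subm I J a%:M = 0.
Proof.
move=> IJ; rewrite subm_scalar_mx; apply/matrixP => i j; rewrite !mxE.
have [ij|] := eqVneq (enum_val i) (enum_val j); last by rewrite mulr0n.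
by move: (disjointFr IJ (enum_valP i)); rewrite ij enum_valP.
Qed.

Lemma subm_scalar_mx_id (R : nzRingType) m (I : {set 'I_m}) (a : R) :
  subm I I a%:M = a%:M.
Proof.
by rewrite subm_scalar_mx; apply/matrixP => i j; rewrite !mxE (inj_eq enum_val_inj).
Qed.

Lemma tierset_tierbefore_disjoint F H (tier : 'I_F -> 'I_H) (h : 'I_H) :
  [disjoint tierset tier h & tierbefore tier h].
Proof.
by rewrite disjoints_subset; apply/subsetP => f; rewrite !inE => /eqP ->; rewrite ltnn.
Qed.

Section BalancedDesign.
Variables (R : numFieldType) (K n L H : nat).
Variables (iota : 'I_(2 ^ K) -> {ffun 'I_K -> bool}) (A : 'I_(2 ^ K).-1 -> {set 'I_K}).
Variables (x : 'I_n -> 'cV[R]_L) (Z : 'I_n -> 'I_(2 ^ K)) (tier : 'I_(2 ^ K).-1 -> 'I_H).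
Hypotheses (K_gt0 : (0 < K)%N) (iota_bij : bijective iota) (A_inj : injective A).
Hypotheses (n_gt0 : (0 < n)%N) (balanced : forall q, (nq Z q * 2 ^ K)%N = n).

Lemma inv_nq_balanced q : (nq Z q)%:R^-1 = (2 ^ K)%:R / n%:R :> R.
Proof.
have /(congr1 (fun k => k%:R : R)) := balanced q; rewrite natrM => <-.
by rewrite invfM mulrCA divff ?mulr1 // pnatr_eq0 expn_eq0.
Qed.

Lemma Btilde_balanced : Btilde R iota A Z = (4 / n%:R)%:M.
Proof.
(* Needs K >= 1: the exponent 2 * (K - 1) in Btilde uses truncated subtraction. *)
have pow2K : (2 ^ K * 2 ^ K = 4 * 2 ^ (2 * (K - 1)))%N.
  by rewrite -expnD -[4%N]/(2 ^ 2)%N -expnD; congr (2 ^ _)%N; lia.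
apply/matrixP => f f'; rewrite !mxE summxE.
under eq_bigr do rewrite !mxE big_ord1 !mxE inv_nq_balanced.
rewrite -mulr_sumr gfq_orthogonal //.
case: (f == f'); rewrite ?mulr0n ?mul0r ?mulr0 // !mulr1n mul1r mulrAC -natrM pow2K natrM.
by field; rewrite pnatr_eq0 -lt0n n_gt0 /= pnatr_eq0 expn_eq0.
Qed.

Lemma cvec_balanced q h :
  cvec R iota A Z tier q h = subv (tierset tier h) (bvec R iota A q).
Proof.
rewrite /cvec; case: ifP => // _.
rewrite Btilde_balanced subm_scalar_mx_disjoint ?tierset_tierbefore_disjoint //.
by rewrite !mul0mx subr0.
Qed.

Lemma theta_x_balanced h :
  theta_x iota A x Z tier h = tau_cat (tau_x iota A x Z) (tierset tier h).
Proof.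
apply/matrixP => k c; case: (mxtens_indexP k) => i j.
rewrite /theta_x /tau_cat [in RHS]mxE mxtens_indexK /= [in LHS]mxE summxE.
rewrite /tau_x [in RHS]mxE summxE; congr (_ * _); apply: eq_bigr => q _.
rewrite cvec_balanced [in LHS]mxE mxtens_indexK [in RHS]mxE /subv !mxE /=.
by rewrite [Ordinal _]ord1.
Qed.

Lemma W_xx_balanced h :
  W_xx iota A x Z tier h = (4 / n%:R) *: (1%:M *t Sxx x).
Proof.
rewrite -scalar_tensmx -(subm_scalar_mx_id R _ (tierset tier h)) -Btilde_balanced.
apply/matrixP => k l; case: (mxtens_indexP k) => i j; case: (mxtens_indexP l) => i' j'.
rewrite tensmxE [in LHS]mxE summxE [in RHS]mxE [in RHS]mxE summxE -mulrA mulr_suml.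
congr (_ * _); apply: eq_bigr => q _.
by rewrite cvec_balanced mxE tensmxE !mxE !big_ord1 !mxE mulrA.
Qed.

Lemma M_h_balanced h : Sxx x \in unitmx ->
  M_h iota A x Z tier h
  = n%:R / 4 * \sum_(f in tierset tier h)
                 ((tau_x iota A x Z f)^T *m invmx (Sxx x) *m tau_x iota A x Z f) 0 0.
Proof.
move=> Sxx_unit; have n_neq0 : n%:R != 0 :> R by rewrite pnatr_eq0 -lt0n.
rewrite /M_h theta_x_balanced W_xx_balanced invmxZ; last first.
  by rewrite unitmxZ ?tens1mx_unit // unitfE mulf_neq0 ?invr_eq0 // pnatr_eq0.
by rewrite invmx_tens1mx // -scalemxAr -scalemxAl mxE tau_cat_quad_form invf_div.
Qed.

End BalancedDesign.

Theorem proposition7 (R : realFieldType) (K n L H : nat)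
  (iota : 'I_(2 ^ K) -> {ffun 'I_K -> bool})
  (A : 'I_(2 ^ K).-1 -> {set 'I_K})
  (x : 'I_n -> 'cV[R]_L) (Z : 'I_n -> 'I_(2 ^ K))
  (tier : 'I_(2 ^ K).-1 -> 'I_H) :
  (1 <= K)%N ->
  bijective iota ->
  injective A -> (forall f, A f != set0) ->
  (2 <= n)%N ->
  Sxx x \in unitmx ->
  (forall q, 1 <= nq Z q)%N ->
  (forall h : 'I_H, exists f, tier f = h) ->
  (* balanced design: n_q = n / Q for every q *)
  (forall q, nq Z q * 2 ^ K = n)%N ->
  [/\ (forall q h, cvec R iota A Z tier q h = subv (tierset tier h) (bvec R iota A q)),
      (forall h, theta_x iota A x Z tier h
                 = tau_cat (tau_x iota A x Z) (tierset tier h))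
    & (forall h, M_h iota A x Z tier h
                 = n%:R / 4 * \sum_(f in tierset tier h)
                     ((tau_x iota A x Z f)^T *m invmx (Sxx x) *m tau_x iota A x Z f) 0 0)].
Proof.
move=> K_gt0 iota_bij A_inj _ n_ge2 Sxx_unit _ _ balanced.
have n_gt0 : (0 < n)%N by apply: leq_trans n_ge2.
split=> [q h|h|h].
- exact: cvec_balanced.
- exact: theta_x_balanced.
- exact: M_h_balanced.
Qed.
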